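(* Let $\mathsf{\Sigma}\in\mathbb{R}^{N\times N_S}$ and $\mathsf{\Lambda}\in\mathbb{R}^{N\times N_L}$ be the Star-to-RWG and Loop-to-RWG matrices of a triangular surface mesh, and for $1\le n\le N_S$ (resp. $1\le n\le N_L$) let $\mathsf{\Sigma}_n=\mathsf{\Sigma}(\mathsf{\Sigma}^{\mathrm T}\mathsf{\Sigma})^+(\mathsf{\Sigma}^{\mathrm T}\mathsf{\Sigma})_n$ (resp. $\mathsf{\Lambda}_n=\mathsf{\Lambda}(\mathsf{\Lambda}^{\mathrm T}\mathsf{\Lambda})^+(\mathsf{\Lambda}^{\mathrm T}\mathsf{\Lambda})_n$) be the filtered Star (resp. Loop) matrices (see context). Then $$\mathsf{\Sigma}_n(\mathsf{\Sigma}_n^{\mathrm T}\mathsf{\Sigma}_n)^+\mathsf{\Sigma}_n^{\mathrm T}=\mathsf{\Sigma}\big((\mathsf{\Sigma}^{\mathrm T}\mathsf{\Sigma})_n\big)^+\mathsf{\Sigma}^{\mathrm T},\qquad \mathsf{\Lambda}_n(\mathsf{\Lambda}_n^{\mathrm T}\mathsf{\Lambda}_n)^+\mathsf{\Lambda}_n^{\mathrm T}=\mathsf{\Lambda}\big((\mathsf{\Lambda}^{\mathrm T}\mathsf{\Lambda})_n\big)^+\mathsf{\Lambda}^{\mathrm T}.$$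
   Context: Consider a closed triangulated surface with $N$ edges, $N_S$ triangles and $N_L$ vertices. Each edge $m$ is shared by two triangles $c_m^+$, $c_m^-$. $[\mathsf{\Sigma}]_{mn}=1$ if cell $n$ is $c_m^+$, $-1$ if cell $n$ is $c_m^-$, $0$ otherwise. $[\mathsf{\Lambda}]_{mn}=\pm1$ when vertex $n$ is an endpoint of edge $m$ (opposite signs for the two endpoints, fixed by the orientation convention), $0$ otherwise. $^+$ denotes the Moore–Penrose pseudo-inverse. For $\mathsf{X}\in\{\mathsf{\Sigma},\mathsf{\Lambda}\}$ with $N_x$ columns, fix an SVD $\mathsf{X}=\mathsf{U}_X\mathsf{S}_X\mathsf{V}_X^{\mathrm T}$ with $\mathsf{V}_X$ orthogonal $N_x\times N_x$ and singular values $\sigma_{X,1}\ge\dots\ge\sigma_{X,N_x}\ge0$, so $\mathsf{X}^{\mathrm T}\mathsf{X}=\mathsf{V}_X\mathrm{diag}(\sigma_{X,i}^2)\mathsf{V}_X^{\mathrm T}$. For $1\le n\le N_x$, $\mathsf{L}_{X,n}$ is diagonal with $[\mathsf{L}_{X,n}]_{ii}=\sigma_{X,i}$ if $i>N_x-n$ and $0$ otherwise, and $(\mathsf{X}^{\mathrm T}\mathsf{X})_n=\mathsf{V}_X\mathsf{L}_{X,n}^2\mathsf{V}_X^{\mathrm T}$. *)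

From HB Require Import structures.
From mathcomp Require Import all_boot all_order all_algebra.
From mathcomp Require Import reals.
From Stdlib Require Import ClassicalEpsilon.
Set Implicit Arguments. Unset Strict Implicit. Unset Printing Implicit Defensive.
Import Order.TTheory GRing.Theory Num.Theory.
Local Open Scope ring_scope.

Section Defs.
Variable R : realType.

Definition penrose (m n : nat) (A : 'M[R]_(m, n)) (X : 'M[R]_(n, m)) : Prop :=
  [/\ A *m X *m A = A, X *m A *m X = X,
      (A *m X)^T = A *m X & (X *m A)^T = X *m A].

(* Moore-Penrose pseudo-inverse A^+ : the (unique, existing) matrix satisfying
   the Penrose conditions, selected by classical choice. *)
Definition pinv (m n : nat) (A : 'M[R]_(m, n)) : 'M[R]_(n, m) :=
  epsilon (inhabits 0) (penrose A).

Definition star_mx (N NS : nat) (cp cm : 'I_N -> 'I_NS) : 'M[R]_(N, NS) :=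
  \matrix_(m < N, k < NS)
    ((k == cp m)%:R - (k == cm m)%:R).

(* Loop-to-RWG matrix: [Lambda]_{mn} = +1 / -1 at the two endpoints v1 m, v2 m
   of edge m (orientation convention encoded by the order of v1, v2). *)
Definition loop_mx (N NL : nat) (v1 v2 : 'I_N -> 'I_NL) : 'M[R]_(N, NL) :=
  \matrix_(m < N, k < NL)
    ((k == v1 m)%:R - (k == v2 m)%:R).

Definition is_svd (N Nx : nat) (X : 'M[R]_(N, Nx)) (U : 'M[R]_N) (V : 'M[R]_Nx)
    (sigma : 'I_Nx -> R) : Prop :=
  [/\ U^T *m U = 1%:M, V^T *m V = 1%:M,
      X = U *m (\matrix_(i < N, j < Nx) (if (i == j :> nat) then sigma j else 0))
            *m V^T,
      (forall i, 0 <= sigma i) /\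
        (forall i j : 'I_Nx, (i <= j)%N -> sigma j <= sigma i) &
      X^T *m X = V *m diag_mx (\row_i (sigma i ^+ 2)) *m V^T].

(* L_{X,n}: diagonal, [L]_{ii} = sigma_i if i > Nx - n (1-based), i.e.
   Nx - n <= i with 0-based i; 0 otherwise. *)
Definition Lmx (Nx : nat) (sigma : 'I_Nx -> R) (n : nat) : 'M[R]_Nx :=
  diag_mx (\row_i (if (Nx - n <= i)%N then sigma i else 0)).

Definition gram_n (Nx : nat) (V : 'M[R]_Nx) (sigma : 'I_Nx -> R) (n : nat)
    : 'M[R]_Nx :=
  V *m (Lmx sigma n *m Lmx sigma n) *m V^T.

Definition filtered (N Nx : nat) (X : 'M[R]_(N, Nx)) (V : 'M[R]_Nx)
    (sigma : 'I_Nx -> R) (n : nat) : 'M[R]_(N, Nx) :=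
  X *m pinv (X^T *m X) *m gram_n V sigma n.

End Defs.

(* Let V diagonalise the Gram matrix: X^T X = V diag(sigma^2) V^T with V orthogonal.
   On matrices of the form V diag(f) V^T, products and the pseudo-inverse act
   entrywise on f (with 0^-1 = 0).  The filtered Gram matrix is V diag(l^2) V^T with
   each l_i equal to sigma_i or 0, so X_n = X P for the orthogonal projection
   P = V diag([l_i != 0]) V^T.  Hence X_n^T X_n = P X^T X P = V diag(l^2) V^T, and
   P (V diag(l^2) V^T)^+ P = (V diag(l^2) V^T)^+ gives the identity.  Beyond this
   diagonalisation, nothing about the mesh matrices is used. *)

From HB Require Import structures.
From mathcomp Require Import all_boot all_order all_algebra.
From mathcomp Require Import reals.
From Stdlib Require Import ClassicalEpsilon.
Import Order.TTheory GRing.Theory Num.Theory.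
Local Open Scope ring_scope.
Set Implicit Arguments. Unset Strict Implicit. Unset Printing Implicit Defensive.

Section OrthDiag.
Variables (R : comPzRingType) (k : nat) (V : 'M[R]_k).

Definition orth_diag (f : 'I_k -> R) : 'M[R]_k := V *m diag_mx (\row_i f i) *m V^T.

Lemma eq_orth_diag (f g : 'I_k -> R) : f =1 g -> orth_diag f = orth_diag g.
Proof.
move=> efg; rewrite /orth_diag; congr (_ *m diag_mx _ *m _).
by apply/rowP=> i; rewrite !mxE efg.
Qed.

Lemma tr_orth_diag (f : 'I_k -> R) : (orth_diag f)^T = orth_diag f.
Proof. by rewrite /orth_diag !trmx_mul trmxK tr_diag_mx mulmxA. Qed.

Hypothesis V_orth : V^T *m V = 1%:M.

Lemma orth_diagM (f g : 'I_k -> R) :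
  orth_diag f *m orth_diag g = orth_diag (fun i => f i * g i).
Proof.
rewrite /orth_diag -!mulmxA (mulmxA V^T) V_orth mul1mx !mulmxA -(mulmxA V).
rewrite mulmx_diag.
by congr (_ *m diag_mx _ *m _); apply/rowP=> i; rewrite !mxE.
Qed.

End OrthDiag.

Section PseudoInverse.
Variable R : realType.

Lemma penrose_uniq m n (A : 'M[R]_(m, n)) X Y :
  penrose A X -> penrose A Y -> X = Y.
Proof.
case=> AXA XAX AX_sym XA_sym [AYA YAY AY_sym YA_sym].
have -> : X = X *m A *m Y.
  transitivity (X *m (A *m X)^T *m (A *m Y)^T).
    by rewrite -mulmxA -trmx_mul mulmxA AYA AX_sym mulmxA XAX.
  by rewrite AX_sym AY_sym !mulmxA XAX.
transitivity ((X *m A)^T *m (Y *m A)^T *m Y).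
  by rewrite XA_sym YA_sym -(mulmxA X A (Y *m A)) (mulmxA A Y A) AYA.
by rewrite -trmx_mul -mulmxA (mulmxA A X A) AXA YA_sym YAY.
Qed.

Lemma pinv_eq m n (A : 'M[R]_(m, n)) X : penrose A X -> pinv A = X.
Proof.
move=> AX; apply: (penrose_uniq _ AX).
by apply: epsilon_spec; exists X.
Qed.

Lemma pinv_orth_diag k (V : 'M[R]_k) (f : 'I_k -> R) : V^T *m V = 1%:M ->
  pinv (orth_diag V f) = orth_diag V (fun i => (f i)^-1).
Proof.
move=> V_orth; apply: pinv_eq.
split; rewrite !orth_diagM ?tr_orth_diag //; apply: eq_orth_diag => i.
all: have [->|fi_neq0] := eqVneq (f i) 0; first by rewrite invr0 !mulr0.
- by rewrite mulfV ?mul1r.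
- by rewrite mulVf ?mul1r.
Qed.

End PseudoInverse.

Section Filtering.
Variables (R : realType) (N k : nat) (X : 'M[R]_(N, k)) (V : 'M[R]_k).
Variables (sigma l : 'I_k -> R).
Hypothesis V_orth : V^T *m V = 1%:M.
Hypothesis gramX : X^T *m X = orth_diag V (fun i => sigma i ^+ 2).
Hypothesis l_kept : forall i, l i != 0 -> l i = sigma i.

Let proj : 'M[R]_k := orth_diag V (fun i => (l i != 0)%:R).

Lemma filtered_proj :
  X *m pinv (X^T *m X) *m orth_diag V (fun i => l i ^+ 2) = X *m proj.
Proof.
rewrite gramX pinv_orth_diag // -mulmxA orth_diagM //; congr (_ *m _).
apply: eq_orth_diag => i; have [->|li_neq0] := eqVneq (l i) 0.
  by rewrite expr0n mulr0.
by rewrite l_kept // mulVf // expf_neq0 // -l_kept.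
Qed.

Lemma gram_filtered_proj :
  (X *m proj)^T *m (X *m proj) = orth_diag V (fun i => l i ^+ 2).
Proof.
rewrite trmx_mul tr_orth_diag mulmxA -(mulmxA proj) gramX !orth_diagM //.
apply: eq_orth_diag => i; have [->|li_neq0] := eqVneq (l i) 0.
  by rewrite mulr0 expr0n.
by rewrite mulr1 mul1r l_kept.
Qed.

Lemma filtered_projectorE :
  let Xn := X *m pinv (X^T *m X) *m orth_diag V (fun i => l i ^+ 2) in
  Xn *m pinv (Xn^T *m Xn) *m Xn^T =
  X *m pinv (orth_diag V (fun i => l i ^+ 2)) *m X^T.
Proof.
rewrite /= filtered_proj gram_filtered_proj pinv_orth_diag //.
rewrite trmx_mul tr_orth_diag.
have proj_inv_proj : proj *m orth_diag V (fun i => (l i ^+ 2)^-1) *m proj =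
    orth_diag V (fun i => (l i ^+ 2)^-1).
  rewrite !orth_diagM //; apply: eq_orth_diag => i.
  have [->|_] := eqVneq (l i) 0; last by rewrite mulr1 mul1r.
  by rewrite mulr0n mulr0 expr2 mulr0 invr0.
by rewrite -[in RHS]proj_inv_proj !mulmxA.
Qed.

End Filtering.

Definition filter_sv (R : realType) k (sigma : 'I_k -> R) n (i : 'I_k) : R :=
  if (k - n <= i)%N then sigma i else 0.

Lemma gram_nE (R : realType) k (V : 'M[R]_k) sigma n :
  gram_n V sigma n = orth_diag V (fun i => filter_sv sigma n i ^+ 2).
Proof.
rewrite /gram_n /Lmx mulmx_diag; congr (_ *m diag_mx _ *m _).
by apply/rowP=> i; rewrite !mxE.
Qed.

Lemma filtered_pinv_projector (R : realType) N k (X : 'M[R]_(N, k)) U V sigma n :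
  is_svd X U V sigma ->
  let Xn := filtered X V sigma n in
  Xn *m pinv (Xn^T *m Xn) *m Xn^T = X *m pinv (gram_n V sigma n) *m X^T.
Proof.
case=> _ V_orth _ _ gramX.
have kept i : filter_sv sigma n i != 0 -> filter_sv sigma n i = sigma i.
  by rewrite /filter_sv; case: ifP => // _; rewrite eqxx.
rewrite /filtered !gram_nE; exact: filtered_projectorE V_orth gramX kept.
Qed.

Theorem mainTheorem4 (R : realType) (N NS NL : nat)
    (cp cm : 'I_N -> 'I_NS) (v1 v2 : 'I_N -> 'I_NL) :
  (forall m, cp m != cm m) ->
  (forall m, v1 m != v2 m) ->
  (forall (U : 'M[R]_N) (V : 'M[R]_NS) (sigma : 'I_NS -> R),
     is_svd (star_mx R cp cm) U V sigma ->
     forall n : nat, (1 <= n <= NS)%N ->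
       let Sn := filtered (star_mx R cp cm) V sigma n in
       Sn *m pinv (Sn^T *m Sn) *m Sn^T =
       star_mx R cp cm *m pinv (gram_n V sigma n) *m (star_mx R cp cm)^T) /\
  (forall (U : 'M[R]_N) (V : 'M[R]_NL) (sigma : 'I_NL -> R),
     is_svd (loop_mx R v1 v2) U V sigma ->
     forall n : nat, (1 <= n <= NL)%N ->
       let Ln := filtered (loop_mx R v1 v2) V sigma n in
       Ln *m pinv (Ln^T *m Ln) *m Ln^T =
       loop_mx R v1 v2 *m pinv (gram_n V sigma n) *m (loop_mx R v1 v2)^T).
Proof.
by move=> _ _; split=> U V sigma svd n _; apply: filtered_pinv_projector svd.
Qed.
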